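(* Let $q$ be a prime power and $r\ge1$ an integer. For every integer $j$ with $0\le j\le q^r+1$ there exists a $q^r$-divisible set of points in a projective space over $\mathbb{F}_q$ of cardinality $$n=\frac{q^{2r}-1}{q-1}+j\cdot\left((q-1)q^r-\frac{q^r-1}{q-1}\right).$$
   Context: Points are $1$-dimensional subspaces of $\mathbb{F}_q^v$. A set $\mathcal{C}$ of points is $\Delta$-divisible if there is an integer $u$ with $|\mathcal{C}\cap H|\equiv u\pmod{\Delta}$ for every hyperplane $H$ of $\mathbb{F}_q^v$, where $\mathcal{C}\cap H$ is the set of points of $\mathcal{C}$ contained in $H$. *)

From HB Require Import structures.
From mathcomp Require Import all_boot all_order all_algebra all_field.
Set Implicit Arguments. Unset Strict Implicit. Unset Printing Implicit Defensive.
Import GRing.Theory.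

Definition is_point (F : finFieldType) (v : nat) (P : {vspace 'rV[F]_v}) : bool :=
  \dim P == 1%N.

Definition is_hyperplane (F : finFieldType) (v : nat) (H : {vspace 'rV[F]_v}) : bool :=
  \dim H == v.-1.

Definition point_set (F : finFieldType) (v : nat) (C : seq {vspace 'rV[F]_v}) : bool :=
  uniq C && all (@is_point F v) C.

Definition count_in (F : finFieldType) (v : nat)
    (C : seq {vspace 'rV[F]_v}) (H : {vspace 'rV[F]_v}) : nat :=
  count (fun P => (P <= H)%VS) C.

Definition divisible_set (F : finFieldType) (v : nat) (Delta : nat)
    (C : seq {vspace 'rV[F]_v}) : Prop :=
  exists u : nat, forall H : {vspace 'rV[F]_v}, is_hyperplane H ->
    count_in C H = u %[mod Delta].

From HB Require Import structures.
From mathcomp Require Import all_boot all_order all_algebra all_field.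
From mathcomp Require Import all_fingroup all_solvable zify.
From Stdlib Require Import Classical.
Set Implicit Arguments. Unset Strict Implicit. Unset Printing Implicit Defensive.
Import GRing.Theory FinRing.Theory passmx.

(* Let L ⊇ F be the field with q^r elements and let S_0, ..., S_(j-1) be
   distinct L-lines of L², i.e. members of the Desarguesian spread
   {(y, c y)} (c ∈ L), {(0, y)}; they are r-dimensional over F and pairwise
   meet in 0. In L² ⊕ F^j ⊕ F^j put W = L², T_i = S_i ⊕ ⟨e_i⟩,
   T'_i = S_i ⊕ ⟨f_i⟩, U_i = S_i ⊕ ⟨e_i, f_i⟩, and let C be the set of points
   of (W ∖ ⋃ U_i) ∪ ⋃ (U_i ∖ (T_i ∪ T'_i)). On nonzero vectors
   1_C + Σ (1_T_i + 1_T'_i) = 1_W + Σ 1_U_i, so counting the vectors of a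
   hyperplane H gives (q - 1)|C ∩ H| + 1 ≡ j (mod q^r): every other term is
   some q^dim(X ∩ H) with dim X > r. As q - 1 is a unit mod q^r, |C ∩ H| is
   constant mod q^r; counting all vectors instead gives |C|. *)

Lemma eqn_modMl_coprime (m d a b : nat) :
  coprime m d -> (m * a == m * b %[mod d]) = (a == b %[mod d]).
Proof.
move=> co_md; wlog le_ab : a b / a <= b.
  move=> IH; case: (leqP a b) => [|/ltnW]; first exact: IH.
  by rewrite eq_sym [in RHS]eq_sym => /IH.
rewrite eq_sym [in RHS]eq_sym !eqn_mod_dvd ?leq_mul2l ?le_ab ?orbT //.
by rewrite -mulnBr Gauss_dvdr // coprime_sym.
Qed.

Lemma size_closed_form (q r j s : nat) : 1 < q ->
  (q - 1) * s + j * (2 * q ^ r.+1) + 1 = q ^ (r + r) + j * q ^ r.+2 + j ->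
  s = (q ^ (2 * r) - 1) %/ (q - 1) + j * ((q - 1) * q ^ r - (q ^ r - 1) %/ (q - 1)).
Proof.
move=> q_gt1; have p_gt0 : 0 < q - 1 by rewrite subn_gt0.
have geom k : q ^ k - 1 = (q - 1) * \sum_(i < k) q ^ i by rewrite !subn1 predn_exp.
have geom2 : q ^ r * q ^ r - 1 = (q - 1) * \sum_(i < 2 * r) q ^ i.
  by rewrite -expnD addnn -mul2n geom.
have x_gt0 : 0 < q ^ r by rewrite expn_gt0 ltnW.
rewrite !geom !mulKn // expnD !expnS.
move: geom2 x_gt0 (geom r); clear geom.
move: (q ^ r) (\sum_(i < 2 * r) _) (\sum_(i < r) _) => x A B.
case: q q_gt1 p_gt0 => // p _; rewrite subn1 /= => p_gt0 eA x_gt0 eB size_eq.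
by apply/eqP; rewrite -(eqn_pmul2l p_gt0); apply/eqP; nia.
Qed.

Local Open Scope ring_scope.

Lemma card_natr_eq0 (F : finFieldType) : #|F|%:R = 0 :> F.
Proof.
by have := @expg_cardG _ [set: F] 1%R (in_setT _); rewrite cardsT zmodXgE => ->.
Qed.

Lemma finField_ext_exists (F : finFieldType) r :
  (0 < r)%N -> {L : fieldExtType F | \dim {:L} = r}.
Proof.
move=> r_gt0; set m := (#|F| ^ r)%N; pose p : {poly F} := 'X^m - 'X.
have q_gt1 := finNzRing_gt1 F.
have m_gt1 : (1 < m)%N by rewrite (ltn_exp2l 0).
have m0 : m%:R = 0 :> F by rewrite natrX card_natr_eq0 expr0n gtn_eqF.
have dp : p^`() = -1.
  by rewrite derivB derivXn derivX -mulr_natr -polyC_natr m0 mulr0 sub0r.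
have p_neq0 : p != 0.
  by apply: contra_eq_neq dp => ->; rewrite deriv0 eq_sym oppr_eq0 oner_eq0.
(* L splits X^m - X; its roots are the fixed points of the r-th power of the
   Frobenius, so they fill L, and they are m distinct ones. *)
have /FinSplittingFieldFor[/= L splitL] := p_neq0.
exists L; have [rs DpL defL] := splitL.
have Urs : uniq rs.
  rewrite -separable_prod_XsubC -(eqp_separable DpL) separable_map.
  by rewrite unlock dp -scaleN1r coprimepZr ?coprimep1 // oppr_eq0 oner_eq0.
have /finField_galois_generator[/= a _ Da] : (1 <= {:L})%VS := sub1v _.
rewrite dimv1 expn1 in Da.
have roots_fixed : rs =i fixedSpace (a ^+ r)%g.
  move=> z; rewrite -root_prod_XsubC -(eqp_root DpL) (sameP fixedSpaceP eqP).
  rewrite /root rmorphB /= rmorphXn /= map_polyX !hornerE subr_eq0 /m; congr (_ == z).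
  elim: (r) => [|i IHi]; first by rewrite gal_id.
  by rewrite expgSr expnSr exprM IHi galM ?Da ?memvf.
have all_roots : forall z : L, z \in rs.
  set E := fixedSpace _ in roots_fixed.
  have : (<<1 & rs>> <= E)%VS.
    rewrite -[E]subfield_closed agenvS // subv_add sub1v.
    by apply/span_subvP => z; rewrite roots_fixed.
  by rewrite defL => /subvP sLE z; rewrite roots_fixed sLE ?memvf.
pose Lf := FinFieldExtType L.
have card_L : #|Lf| = m.
  have /eq_card-> : Lf =i rs by move=> z; rewrite all_roots.
  apply: succn_inj; rewrite (card_uniqP _) // -(size_prod_XsubC _ id).
  rewrite -(eqp_size DpL) size_map_poly size_polyDl size_polyXn //.
  by rewrite size_polyN size_polyX.
have : #|Lf| = (#|F| ^ \dim {:L})%N.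
  by rewrite -(@card_vspace F Lf); apply: eq_card => x; rewrite memvf.
by rewrite card_L => /eqP; rewrite eqn_exp2l // => /eqP.
Qed.

Section PairSubspaces.
Variables (K : fieldType) (U V : vectType K).
Implicit Types (A : {vspace U}) (B : {vspace V}) (x : U * V).

Lemma pairD (u u' : U) (v v' : V) : (u, v) + (u', v') = (u + u', v + v') :> U * V.
Proof. by []. Qed.

Lemma pairZ (a : K) (u : U) (v : V) : a *: (u, v) = (a *: u, a *: v) :> U * V.
Proof. by []. Qed.

Definition pair_inl (u : U) : U * V := (u, 0).
Definition pair_inr (v : V) : U * V := (0, v).

Fact pair_inl_is_linear : linear pair_inl.
Proof. by move=> a u u'; rewrite /pair_inl pairZ pairD scaler0 addr0. Qed.
Fact pair_inr_is_linear : linear pair_inr.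
Proof. by move=> a v v'; rewrite /pair_inr pairZ pairD scaler0 addr0. Qed.
HB.instance Definition _ :=
  GRing.isLinear.Build K U (U * V)%type *:%R pair_inl pair_inl_is_linear.
HB.instance Definition _ :=
  GRing.isLinear.Build K V (U * V)%type *:%R pair_inr pair_inr_is_linear.

Definition pairv A B : {vspace U * V} :=
  (linfun pair_inl @: A + linfun pair_inr @: B)%VS.

Lemma mem_pairv A B x : (x \in pairv A B) = (x.1 \in A) && (x.2 \in B).
Proof.
apply/memv_addP/andP => [[_ /memv_imgP[a Aa ->] [_ /memv_imgP[b Bb ->] ->]]|[Ax Bx]].
  by rewrite !lfunE pairD addr0 add0r.
exists (linfun pair_inl x.1); first exact: memv_img.
exists (linfun pair_inr x.2); first exact: memv_img.
by rewrite !lfunE pairD addr0 add0r; case: x {Ax Bx}.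
Qed.

Lemma dim_pairv A B : \dim (pairv A B) = (\dim A + \dim B)%N.
Proof.
have lker_inl : lker (linfun pair_inl) == 0%VS.
  by apply/lker0P => u u'; rewrite !lfunE => -[].
have lker_inr : lker (linfun pair_inr) == 0%VS.
  by apply/lker0P => v v'; rewrite !lfunE => -[].
rewrite dimv_disjoint_sum ?limg_dim_eq ?(eqP lker_inl) ?(eqP lker_inr) ?capv0 //.
apply/eqP; rewrite -subv0; apply/subvP => _ /memv_capP[/memv_imgP[u _ ->]].
by case/memv_imgP => v _; rewrite !lfunE => -[-> _]; rewrite memv0.
Qed.

Lemma pairvS A A' B B' :
  (A <= A')%VS -> (B <= B')%VS -> (pairv A B <= pairv A' B')%VS.
Proof.
move=> /subvP sA /subvP sB; apply/subvP => x.
by rewrite !mem_pairv => /andP[/sA-> /sB->].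
Qed.

Lemma pairv_cap A A' B B' :
  (pairv A B :&: pairv A' B' = pairv (A :&: A') (B :&: B'))%VS.
Proof. by apply/vspaceP => x; rewrite !(memv_cap, mem_pairv) andbACA. Qed.

Lemma pairv0 : pairv 0 0 = 0%VS.
Proof. by apply/vspaceP => -[u v]; rewrite mem_pairv !memv0 xpair_eqE. Qed.

End PairSubspaces.

Section DesarguesianSpread.
Variables (F : fieldType) (L : fieldExtType F).

Definition graph_mul (c y : L) : (L * L)%type := (y, c * y).

Fact graph_mul_is_linear c : linear (graph_mul c).
Proof. by move=> a y y'; rewrite /graph_mul pairZ pairD mulrDr scalerAr. Qed.
HB.instance Definition _ c :=
  GRing.isLinear.Build F L (L * L)%type *:%R (graph_mul c) (graph_mul_is_linear c).

Definition spread (o : option L) : {vspace L * L} :=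
  if o is Some c then (linfun (graph_mul c) @: fullv)%VS else pairv 0 fullv.

Lemma mem_spread o (w : L * L) :
  (w \in spread o) = if o is Some c then w.2 == c * w.1 else w.1 == 0.
Proof.
case: o => [c|]; last by rewrite mem_pairv memv0 memvf andbT.
apply/memv_imgP/eqP => [[y _ ->]|w2]; first by rewrite lfunE.
by exists w.1; rewrite ?memvf // lfunE /graph_mul; case: w w2 => y z /= ->.
Qed.

Lemma dim_spread o : \dim (spread o) = \dim {:L}.
Proof.
case: o => [c|]; last by rewrite dim_pairv dimv0.
rewrite limg_dim_eq // capfv; apply/eqP/lker0P => y y'.
by rewrite !lfunE => -[].
Qed.

Lemma spread_cap o o' : o != o' -> (spread o :&: spread o' = 0)%VS.
Proof.
move=> neq_oo'; apply/eqP; rewrite -subv0; apply/subvP => -[y z].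
rewrite memv_cap !mem_spread memv0 xpair_eqE /=.
case: o o' neq_oo' => [c|] [c'|] //= neq_oo';
  try by case/andP=> /eqP-> /eqP->; rewrite mulr0 eqxx.
have neq_cc' : c != c' by apply: contraNneq neq_oo' => ->.
case/andP=> /eqP-> /eqP/esym/eqP; rewrite -subr_eq0 -mulrBl mulf_eq0 subr_eq0.
by rewrite eq_sym (negPf neq_cc') => /eqP->; rewrite mulr0 eqxx.
Qed.

End DesarguesianSpread.

Lemma partial_spread_exists (F : finFieldType) (L : fieldExtType F) r j :
  \dim {:L} = r -> (j <= #|F| ^ r + 1)%N ->
  exists S : 'I_j -> {vspace L * L},
    (forall i, \dim (S i) = r) /\ (forall i k, i != k -> (S i :&: S k = 0)%VS).
Proof.
move=> <-; have card_L : #|finvect_type L| = (#|F| ^ \dim {:L})%N.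
  by rewrite -(@card_vspace F (finvect_type L)); apply: eq_card => y; rewrite memvf.
rewrite -card_L addn1 -card_option => le_j.
pose o_ (i : 'I_j) : option (finvect_type L) := enum_val (widen_ord le_j i).
have o_inj : injective o_ by move=> i k /enum_val_inj/(congr1 val)/= /val_inj.
exists (fun i => spread (o_ i)); split=> [i|i k]; first exact: dim_spread.
by rewrite -(inj_eq o_inj) => /spread_cap.
Qed.

Lemma sum_nat_of_bool_card (T : finType) (P Q : pred T) :
  (\sum_(x in P) (Q x : nat))%N = #|[set x in P | Q x]|.
Proof.
rewrite -sum1_card [RHS](eq_bigl (fun x => P x && Q x)) => [|x]; last by rewrite inE.
by rewrite big_mkcondr; apply: eq_bigr => x _; case: (Q x).
Qed.

Section LinesOfCone.
Variables (F : finFieldType) (n : nat).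
Implicit Types (A : {set 'rV[F]_n}) (H : {vspace 'rV[F]_n}).

Definition lines A : seq {vspace 'rV[F]_n} := undup [seq <[x]>%VS | x <- enum A].

Variable A : {set 'rV[F]_n}.
Hypothesis A0 : 0 \notin A.
Hypothesis AZ : forall c x, c != 0 -> x \in A -> c *: x \in A.

Let neq0_cone x : x \in A -> x != 0.
Proof. by apply: contraTneq => ->. Qed.

Lemma point_set_lines : point_set (lines A).
Proof.
rewrite /point_set undup_uniq; apply/allP => P.
rewrite mem_undup => /mapP[x]; rewrite mem_enum => Ax ->.
by rewrite /is_point dim_vline neq0_cone.
Qed.

Lemma card_line_cone x0 : x0 \in A ->
  #|[set x in A | <[x]>%VS == <[x0]>%VS]| = (#|F| - 1)%N.
Proof.
move=> Ax0; have x0_neq0 := neq0_cone Ax0.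
have -> : [set x in A | <[x]>%VS == <[x0]>%VS] = [set x in <[x0]>%VS | x != 0].
  apply/setP => x; rewrite !inE; apply/andP/andP => [[Ax /eqP <-]|[/vlineP[c ->] cx0]].
    by rewrite memv_line neq0_cone.
  have c_neq0 : c != 0 by apply: contraNneq cx0 => ->; rewrite scale0r.
  by rewrite AZ // eqEdim -memvE memvZ ?memv_line // !dim_vline x0_neq0 cx0.
have := cardD1 0 (mem <[x0]>%VS).
rewrite card_vspace dim_vline x0_neq0 expn1 mem0v add1n => ->.
by rewrite subn1 /=; apply: eq_card => x; rewrite !inE andbC.
Qed.

Lemma count_lines H :
  ((#|F| - 1) * count_in (lines A) H)%N = #|[set x in H | x \in A]|.
Proof.
have -> : #|[set x in H | x \in A]| = (\sum_(x in A) (x \in H))%N.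
  by rewrite sum_nat_of_bool_card; apply: eq_card => x; rewrite !inE andbC.
rewrite /count_in -sumn_count sumnE big_map big_distrr /=.
transitivity (\sum_(P <- lines A) \sum_(x in A) ((<[x]>%VS == P) * (P <= H)%VS))%N.
  apply: eq_big_seq => P; rewrite mem_undup => /mapP[x0]; rewrite mem_enum => Ax0 ->.
  by rewrite -big_distrl sum_nat_of_bool_card card_line_cone.
rewrite exchange_big /=; apply: eq_bigr => x Ax.
rewrite (bigD1_seq <[x]>%VS) ?undup_uniq ?mem_undup ?map_f ?mem_enum //=.
rewrite eqxx mul1n -memvE big1_seq ?addn0 // => P /andP[neq_Px _].
by rewrite eq_sym (negPf neq_Px).
Qed.

End LinesOfCone.

Lemma divisible_set_coprime (F : finFieldType) n (C : seq {vspace 'rV[F]_n})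
    (Delta m a b : nat) :
  coprime m Delta ->
  (forall H, is_hyperplane H -> (m * count_in C H + a = b %[mod Delta])%N) ->
  divisible_set Delta C.
Proof.
move=> co_m congrC.
have [[H0 hyp_H0] | no_hyp] :=
  classic (exists H0 : {vspace 'rV[F]_n}, is_hyperplane H0); last first.
  by exists 0%N => H hyp_H; case: no_hyp; exists H.
exists (count_in C H0) => H hyp_H; apply/eqP.
rewrite -(eqn_modMl_coprime _ _ co_m) -(eqn_modDr a).
by rewrite (congrC _ hyp_H) (congrC _ hyp_H0).
Qed.

Lemma dimv_cap_hyperplane (F : fieldType) n (X H : {vspace 'rV[F]_n}) :
  \dim H = n.-1 -> (\dim X <= (\dim (X :&: H)).+1)%N.
Proof.
move=> dimH; have := dimv_sum_cap X H; have := dimvS (subvf (X + H)).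
rewrite dimvf /dim /= mul1n dimH; lia.
Qed.

Section ConeConfiguration.
Variables (F : finFieldType) (n j : nat).
Variables (W : {vspace 'rV[F]_n}) (T T' U : 'I_j -> {vspace 'rV[F]_n}).
Hypothesis subTU : forall i, (T i <= U i)%VS.
Hypothesis subT'U : forall i, (T' i <= U i)%VS.
Hypothesis capUW : forall i, (U i :&: W <= T i :&: T' i)%VS.
Hypothesis capTT' : forall i, (T i :&: T' i <= W)%VS.
Hypothesis capUU : forall i k, i != k -> (U i :&: U k = 0)%VS.

Definition cone_set : {set 'rV[F]_n} :=
  [set x | (x != 0) && ((x \in W) && [forall i, x \notin U i]
                        || [exists i, [&& x \in U i, x \notin T i & x \notin T' i]])].

Lemma cone_set0 : 0 \notin cone_set.
Proof. by rewrite inE eqxx. Qed.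

Lemma cone_setZ c x : c != 0 -> x \in cone_set -> c *: x \in cone_set.
Proof.
move=> c_neq0; have memZ (X : {vspace 'rV[F]_n}) : (c *: x \in X) = (x \in X).
  by rewrite rpredZeq (negPf c_neq0).
rewrite !inE scaler_eq0 (negPf c_neq0) memZ.
by congr (_ && (_ && _ || _)); [apply: eq_forallb | apply: eq_existsb] => i;
  rewrite !memZ.
Qed.

Lemma mem_U_uniq x i k : x != 0 -> x \in U i -> x \in U k -> i = k.
Proof.
move=> x_neq0 xUi xUk; apply/eqP; apply: contraNT x_neq0 => neq_ik.
by rewrite -memv0 -(capUU neq_ik) memv_cap xUi xUk.
Qed.

Lemma cone_set_U x i : x != 0 -> x \in U i ->
  (x \in cone_set) = (x \notin T i) && (x \notin T' i).
Proof.
move=> x_neq0 xUi; rewrite inE x_neq0 /=.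
have -> : [forall k, x \notin U k] = false.
  by apply/negbTE/forallPn; exists i; rewrite negbK.
rewrite andbF /=; apply/existsP/idP => [[k /and3P[xUk]]|nTT'i].
  by rewrite -(mem_U_uniq x_neq0 xUi xUk) => -> ->.
by exists i; rewrite xUi.
Qed.

Lemma cone_set_notU x : x != 0 -> (forall i, x \notin U i) ->
  (x \in cone_set) = (x \in W).
Proof.
move=> x_neq0 nU; rewrite inE x_neq0.
have -> : [forall i, x \notin U i] by apply/forallP.
have -> : [exists i, [&& x \in U i, x \notin T i & x \notin T' i]] = false.
  by apply/negbTE/existsPn => i; rewrite (negPf (nU i)).
by rewrite andbT orbF.
Qed.

Lemma cone_set_indicator x :
  ((x \in cone_set) + \sum_i ((x \in T i) + (x \in T' i)) + (x == 0%R)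
   = (x \in W) + \sum_i (x \in U i) + j * (x == 0%R))%N.
Proof.
have [-> | x_neq0] := eqVneq x 0.
  rewrite (negPf cone_set0) !mem0v.
  under eq_bigr do rewrite !mem0v.
  under [in RHS]eq_bigr do rewrite mem0v.
  by rewrite !sum_nat_const card_ord; lia.
have [i xUi | nU] := pickP (fun i => x \in U i); last first.
  have nT k : (x \in T k) = false by apply: contraFF (nU k) => /(subvP (subTU k)).
  have nT' k : (x \in T' k) = false by apply: contraFF (nU k) => /(subvP (subT'U k)).
  have -> : (\sum_i ((x \in T i) + (x \in T' i)) = 0)%N.
    by apply: big1 => k _; rewrite nT nT'.
  have -> : (\sum_i (x \in U i) = 0)%N by apply: big1 => k _; rewrite nU.
  by rewrite cone_set_notU // => [|k]; rewrite ?muln0 ?nU.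
have nU k : k != i -> (x \in U k) = false.
  by apply: contraNF => /(mem_U_uniq x_neq0 xUi) ->.
have -> : (\sum_i ((x \in T i) + (x \in T' i)) = (x \in T i) + (x \in T' i))%N.
  rewrite (bigD1 i) //= big1 ?addn0 // => k /nU nUk.
  by rewrite (contraFF (subvP (subTU k) x)) ?(contraFF (subvP (subT'U k) x)).
have -> : (\sum_i (x \in U i) = 1)%N.
  by rewrite (bigD1 i) //= xUi big1 // => k /nU ->.
rewrite (cone_set_U x_neq0 xUi) muln0 !addn0.
have [xW | nxW] := boolP (x \in W).
  have /memv_capP[-> ->] // : x \in (T i :&: T' i)%VS.
  by apply: (subvP (capUW i)); rewrite memv_cap xUi.
have : ~~ ((x \in T i) && (x \in T' i)).
  by apply: contra nxW => /andP[xT xT']; apply: (subvP (capTT' i)); rewrite memv_cap xT.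
by case: (x \in T i); case: (x \in T' i).
Qed.

Lemma card_cone_set_cap (H : {vspace 'rV[F]_n}) :
  (#|[set x in H | x \in cone_set]|
     + \sum_i (#|F| ^ \dim (T i :&: H) + #|F| ^ \dim (T' i :&: H)) + 1
   = #|F| ^ \dim (W :&: H) + \sum_i #|F| ^ \dim (U i :&: H) + j)%N.
Proof.
have card_cap (X : {vspace 'rV[F]_n}) :
    (\sum_(x in H) (x \in X) = #|F| ^ \dim (X :&: H))%N.
  rewrite sum_nat_of_bool_card -card_vspace; apply: eq_card => x.
  by rewrite inE memv_cap andbC.
have card0 : (\sum_(x in H) (x == 0%R) = 1)%N.
  by rewrite (bigD1 0) ?mem0v //= eqxx big1 // => x /andP[_ /negPf->].
transitivity (\sum_(x in H)
   ((x \in cone_set) + \sum_i ((x \in T i) + (x \in T' i)) + (x == 0%R)))%N.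
  rewrite !big_split /= card0 sum_nat_of_bool_card exchange_big /=.
  congr (_ + _ + _); rewrite -big_split; apply: eq_bigr => i _.
  by rewrite big_split /= !card_cap.
under eq_bigr do rewrite cone_set_indicator.
rewrite !big_split /= -big_distrr /=.
rewrite card0 muln1 card_cap exchange_big /=.
by congr (_ + _ + _); apply: eq_bigr => i _.
Qed.

Variable r : nat.
Hypothesis r_gt0 : (0 < r)%N.
Hypothesis dimW : \dim W = (r + r)%N.
Hypothesis dimT : forall i, \dim (T i) = r.+1.
Hypothesis dimT' : forall i, \dim (T' i) = r.+1.
Hypothesis dimU : forall i, \dim (U i) = r.+2.

Lemma card_cone_set_hyperplane H : is_hyperplane H ->
  (#|[set x in H | x \in cone_set]| + 1 = j %[mod #|F| ^ r])%N.
Proof.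
move=> /eqP dimH.
have dvd_cap X : (r < \dim X)%N -> (#|F| ^ r %| #|F| ^ \dim (X :&: H))%N.
  by move=> ltrX; rewrite dvdn_exp2l // -ltnS (leq_trans ltrX) ?dimv_cap_hyperplane.
have dvdT : (#|F| ^ r %| \sum_i (#|F| ^ \dim (T i :&: H) + #|F| ^ \dim (T' i :&: H)))%N.
  by apply: dvdn_sum => i _; rewrite dvdn_add ?dvd_cap ?dimT ?dimT'.
have dvdWU : (#|F| ^ r %| #|F| ^ \dim (W :&: H) + \sum_i #|F| ^ \dim (U i :&: H))%N.
  rewrite dvdn_add ?dvdn_sum // => [|i _]; rewrite dvd_cap ?dimW ?dimU //; lia.
have := congr1 (modn^~ (#|F| ^ r)%N) (card_cone_set_cap H).
by rewrite addnAC -modnDmr (eqP dvdT) addn0 => ->; rewrite -modnDml (eqP dvdWU).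
Qed.

Theorem divisible_lines_cone_set : divisible_set (#|F| ^ r) (lines cone_set).
Proof.
have q_gt1 := finNzRing_gt1 F.
apply: (@divisible_set_coprime _ _ _ _ (#|F| - 1) 1 j) => [|H hypH].
  by rewrite coprimeXr // -{2}(subnK (ltnW q_gt1)) addn1 coprimenS.
by rewrite count_lines ?cone_set0 ?card_cone_set_hyperplane //; apply: cone_setZ.
Qed.

Theorem size_lines_cone_set :
  ((#|F| - 1) * size (lines cone_set) + j * (2 * #|F| ^ r.+1) + 1
   = #|F| ^ (r + r) + j * #|F| ^ r.+2 + j)%N.
Proof.
have count_full : count_in (lines cone_set) fullv = size (lines cone_set).
  by rewrite /count_in (eq_count (a2 := predT)) ?count_predT // => P; apply: subvf.
rewrite -count_full count_lines ?cone_set0 //; last exact: cone_setZ.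
have := card_cone_set_cap fullv; rewrite !capvf dimW.
under eq_bigr do rewrite !capvf dimT dimT'.
under [in X in _ = X -> _]eq_bigr do rewrite capvf dimU.
by rewrite !sum_nat_const card_ord mul2n -addnn.
Qed.

End ConeConfiguration.

Section CoordinateImage.
Variables (K : fieldType) (vT : vectType K).
Implicit Types X Y : {vspace vT}.

Definition coord_img X : {vspace 'rV[K]_(\dim {:vT})} :=
  (linfun (rVof (vbasis {:vT})) @: X)%VS.

Lemma lker_coord : lker (linfun (rVof (vbasis {:vT}))) == 0%VS.
Proof.
apply/lker0P => x y; rewrite !lfunE.
exact/(can_inj (rVofK (vbasisP fullv))).
Qed.

Lemma coord_imgS X Y : (X <= Y)%VS -> (coord_img X <= coord_img Y)%VS.
Proof. exact: limgS. Qed.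

Lemma coord_img_cap X Y : coord_img (X :&: Y) = (coord_img X :&: coord_img Y)%VS.
Proof. exact: lker0_img_cap lker_coord. Qed.

Lemma coord_img0 : coord_img 0 = 0%VS.
Proof. exact: limg0. Qed.

Lemma dim_coord_img X : \dim (coord_img X) = \dim X.
Proof. by rewrite limg_dim_eq // (eqP lker_coord) capv0. Qed.

End CoordinateImage.

Section PartialSpreadCone.
Variables (F : finFieldType) (V : vectType F) (j : nat) (S : 'I_j -> {vspace V}).
Hypothesis capS : forall i k, i != k -> (S i :&: S k = 0)%VS.

Local Notation P := (V * ('rV[F]_j * 'rV[F]_j))%type.

Definition unit_line (i : 'I_j) : {vspace 'rV[F]_j} := <[delta_mx 0%R i]>%VS.

Lemma dim_unit_line i : \dim (unit_line i) = 1%N.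
Proof.
have : delta_mx 0 i != 0 :> 'rV[F]_j.
  by apply/eqP => /matrixP/(_ 0 i)/eqP; rewrite !mxE !eqxx oner_eq0.
by rewrite dim_vline => ->.
Qed.

Lemma unit_line_cap i k : i != k -> (unit_line i :&: unit_line k = 0)%VS.
Proof.
move=> neq_ik; apply/eqP; rewrite -subv0; apply/subvP => _ /memv_capP[/vlineP[a ->]].
case/vlineP => b /matrixP/(_ 0 i)/eqP; rewrite !mxE !eqxx (negPf neq_ik) mulr1 mulr0.
by move=> /eqP->; rewrite scale0r mem0v.
Qed.

Definition cone_W : {vspace P} := pairv fullv (pairv 0 0).
Definition cone_T i : {vspace P} := pairv (S i) (pairv (unit_line i) 0).
Definition cone_T' i : {vspace P} := pairv (S i) (pairv 0 (unit_line i)).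
Definition cone_U i : {vspace P} := pairv (S i) (pairv (unit_line i) (unit_line i)).

Lemma cone_TU i : (cone_T i <= cone_U i)%VS.
Proof. by rewrite !pairvS ?sub0v. Qed.

Lemma cone_T'U i : (cone_T' i <= cone_U i)%VS.
Proof. by rewrite !pairvS ?sub0v. Qed.

Lemma cone_UW i : (cone_U i :&: cone_W <= cone_T i :&: cone_T' i)%VS.
Proof. by rewrite !pairv_cap capvf capvv !capv0 !cap0v !pairvS. Qed.

Lemma cone_TT' i : (cone_T i :&: cone_T' i <= cone_W)%VS.
Proof. by rewrite !pairv_cap capv0 cap0v !pairvS ?subvf. Qed.

Lemma cone_UU i k : i != k -> (cone_U i :&: cone_U k = 0)%VS.
Proof. by move=> neq_ik; rewrite !pairv_cap capS ?unit_line_cap // !pairv0. Qed.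

Variable r : nat.
Hypothesis r_gt0 : (0 < r)%N.
Hypothesis dimV : \dim {:V} = (r + r)%N.
Hypothesis dimS : forall i, \dim (S i) = r.

Theorem partial_spread_cone :
  exists v (C : seq {vspace 'rV[F]_v}),
    [/\ point_set C, divisible_set (#|F| ^ r) C
      & ((#|F| - 1) * size C + j * (2 * #|F| ^ r.+1) + 1
         = #|F| ^ (r + r) + j * #|F| ^ r.+2 + j)%N].
Proof.
pose W := coord_img cone_W; pose T i := coord_img (cone_T i).
pose T' i := coord_img (cone_T' i); pose U i := coord_img (cone_U i).
have subTU i : (T i <= U i)%VS by apply/coord_imgS/cone_TU.
have subT'U i : (T' i <= U i)%VS by apply/coord_imgS/cone_T'U.
have capUW i : (U i :&: W <= T i :&: T' i)%VS.
  by rewrite -!coord_img_cap; apply/coord_imgS/cone_UW.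
have capTT' i : (T i :&: T' i <= W)%VS.
  by rewrite -!coord_img_cap; apply/coord_imgS/cone_TT'.
have capUU i k : i != k -> (U i :&: U k = 0)%VS.
  by move=> neq_ik; rewrite -coord_img_cap cone_UU ?coord_img0.
have dimW : \dim W = (r + r)%N.
  by rewrite dim_coord_img !dim_pairv dimv0 !addn0 dimV.
have dimT i : \dim (T i) = r.+1.
  by rewrite dim_coord_img !dim_pairv dimS dim_unit_line dimv0 addn0 addn1.
have dimT' i : \dim (T' i) = r.+1.
  by rewrite dim_coord_img !dim_pairv dimS dim_unit_line dimv0 add0n addn1.
have dimU i : \dim (U i) = r.+2.
  by rewrite dim_coord_img !dim_pairv dimS dim_unit_line addn2.
exists (\dim {:P}), (lines (cone_set W T T' U)); split.
- exact: point_set_lines (cone_set0 _ _ _ _).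
- by apply: (divisible_lines_cone_set subTU subT'U capUW capTT' capUU r_gt0).
- by apply: (size_lines_cone_set subTU subT'U capUW capTT' capUU).
Qed.

End PartialSpreadCone.

Theorem corollary4p17 (F : finFieldType) (r j : nat) :
  (1 <= r)%N -> (j <= #|F| ^ r + 1)%N ->
  let q := #|F| in
  exists (v : nat) (C : seq {vspace 'rV[F]_v}),
    point_set C /\ divisible_set (q ^ r) C /\
    size C = ((q ^ (2 * r) - 1) %/ (q - 1)
              + j * ((q - 1) * q ^ r - (q ^ r - 1) %/ (q - 1)))%N.
Proof.
move=> r_gt0 le_j q.
have [L dimL] := finField_ext_exists F r_gt0.
have [S [dimS capS]] := partial_spread_exists dimL le_j.
have dimLL : \dim {:(L * L)%type} = (r + r)%N by rewrite dimvf /dim /= -dimvf dimL.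
have [v [C [ptC divC sizeC]]] := partial_spread_cone capS r_gt0 dimLL dimS.
exists v, C; split=> //; split=> //.
exact: size_closed_form (finNzRing_gt1 F) sizeC.
Qed.
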